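(* Let $G$ be a finite chordal graph and $v$ a vertex of $G$ that lies in a maximal clique of size at least three. Then $v$ is incident on at least two exposed edges of $G$.
   Context: All graphs are finite, undirected, simple. A graph is chordal if every induced cycle has length three. A facet edge of $G$ is an edge $xy$ such that $\{x,y\}$ is a maximal clique of $G$. An edge of $G$ is exposed if it is contained in a unique maximal clique of $G$ and it is not a facet edge. *)

From mathcomp Require Import all_boot.
Set Implicit Arguments. Unset Strict Implicit. Unset Printing Implicit Defensive.

Definition simple_graph (T : finType) (e : rel T) : Prop :=
  symmetric e /\ irreflexive e.

Definition clique (T : finType) (e : rel T) (K : {set T}) : Prop :=
  forall x y, x \in K -> y \in K -> x != y -> e x y.

Definition maximal_clique (T : finType) (e : rel T) (K : {set T}) : Prop :=
  clique e K /\ forall K' : {set T}, clique e K' -> K \subset K' -> K' = K.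

Definition induced_cycle (T : finType) (e : rel T) (c : seq T) : Prop :=
  [/\ 3 <= size c, uniq c &
    forall x0 i j, i < size c -> j < size c ->
      e (nth x0 c i) (nth x0 c j) =
      ((j == (i.+1 %% size c)) || (i == (j.+1 %% size c)))].

Definition chordal (T : finType) (e : rel T) : Prop :=
  forall c : seq T, induced_cycle e c -> size c = 3.

Definition edge (T : finType) (e : rel T) (x y : T) : Prop := x != y /\ e x y.

Definition facet_edge (T : finType) (e : rel T) (x y : T) : Prop :=
  edge e x y /\ maximal_clique e [set x; y].

Definition exposed_edge (T : finType) (e : rel T) (x y : T) : Prop :=
  [/\ edge e x y,
      (exists! K : {set T}, maximal_clique e K /\ [set x; y] \subset K)
    & ~ facet_edge e x y].

(* Let L be the set of neighbours u of v for which vu lies in a triangle.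
   The common neighbours of v and u belong to L, so if u is simplicial in G[L]
   then v, u and their common neighbours form the unique maximal clique
   containing vu, which has a third vertex: vu is exposed. The clique K puts
   at least two vertices into L, and Dirac's lemma for the chordal graph G[L]
   (a simplicial vertex exists outside any clique that is not everything)
   provides two of them that are simplicial. Dirac's lemma rests on the fact
   that in a chordal graph the neighbours of x adjacent to one component of
   the non-neighbours of x form a clique: a shortest path through that
   component between two non-adjacent such neighbours would close, with x,
   an induced cycle of length at least four. *)

From mathcomp Require Import all_boot zify.
Set Implicit Arguments. Unset Strict Implicit. Unset Printing Implicit Defensive.

Lemma modn_succ i n : i < n -> i.+1 %% n = if i.+1 == n then 0 else i.+1.
Proof.
move=> lt_in; case: eqP => [-> | /eqP ne]; first by rewrite modnn.
by rewrite modn_small //; lia.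
Qed.

Section Cliques.
Variables (T : finType) (e : rel T).

Lemma cliqueP (K : {set T}) :
  reflect (clique e K) [forall x in K, forall y in K, (x != y) ==> e x y].
Proof.
apply: (iffP forall_inP) => [cK x y xK yK ne_xy | cK x xK].
  by have /forall_inP/(_ y yK)/implyP := cK x xK; apply.
by apply/forall_inP => y yK; apply/implyP; apply: cK.
Qed.

Lemma subset_clique (K K' : {set T}) : K' \subset K -> clique e K -> clique e K'.
Proof. by move=> /subsetP sK'K cK x y /sK'K xK /sK'K yK; apply: cK. Qed.

Lemma clique0 : clique e set0.
Proof. by move=> x y; rewrite inE. Qed.

Lemma clique1 a : clique e [set a].
Proof. by move=> x y; rewrite !inE => /eqP-> /eqP->; rewrite eqxx. Qed.

Lemma clique_sub_common_nbrs (K : {set T}) v u : clique e K -> v \in K -> u \in K ->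
  K \subset [set w | (w == v) || (w == u) || e v w && e u w].
Proof.
move=> cK vK uK; apply/subsetP => w wK; rewrite inE.
case: (eqVneq w v) => //= ne_wv; case: (eqVneq w u) => //= ne_wu.
by rewrite !cK // eq_sym.
Qed.

End Cliques.

Section ChordalGraph.
Variables (T : finType) (e : rel T).
Hypotheses (eS : symmetric e) (e_irr : irreflexive e).

(* [w] is a walk between two distinct, non-adjacent neighbours of [x] whose
   inner vertices lie outside the closed neighbourhood of [x]; thus [x :: w]
   is a cycle. *)
Definition detour (x : T) (w : seq T) : Prop :=
  [/\ forall i, i.+1 < size w -> e (nth x w i) (nth x w i.+1),
      e x (nth x w 0) /\ e x (nth x w (size w).-1),
      ~~ e (nth x w 0) (nth x w (size w).-1) /\ nth x w 0 != nth x w (size w).-1 &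
      forall i, 0 < i < (size w).-1 -> (nth x w i != x) && ~~ e x (nth x w i)].

Lemma detour_size x w : detour x w -> 1 < size w.
Proof.
case=> _ _ [_ ends_ne] _; rewrite ltnNge; move: ends_ne; apply: contraNN => le_w1.
by rewrite (_ : (size w).-1 = 0) //; lia.
Qed.

Lemma detour_adj_center x w a : detour x w -> a < size w ->
  e x (nth x w a) = (a == 0) || (a == (size w).-1).
Proof.
case=> _ [x_first x_last] _ w_inner lt_aw.
case: eqP => [-> // | /eqP a_ne0]; case: eqP => [-> // | /eqP a_ne_last].
by have /andP[_ /negbTE] := w_inner a (ltac:(lia)).
Qed.

Lemma detour_shortcut x w k b : detour x w -> k < b < size w ->
    (k = 0 -> nth x w b = nth x w 0) ->
    (0 < k -> e (nth x w k.-1) (nth x w b)) ->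
  detour x (take k w ++ drop b w).
Proof.
move=> [w_path x_ends ends_nadj w_inner] /andP[lt_kb lt_bw] first_eq k_adj.
set w' := _ ++ _.
have size_w' : size w' = k + (size w - b).
  by rewrite size_cat size_takel ?size_drop; lia.
have nth_w' i : nth x w' i = if i < k then nth x w i else nth x w (b + (i - k)).
  by rewrite nth_cat size_takel; [case: ifP => ik; rewrite ?nth_take ?nth_drop | lia].
have w'_first : nth x w' 0 = nth x w 0.
  by rewrite nth_w'; case: posnP => [k0 | //]; rewrite k0 addn0 first_eq.
have w'_last : nth x w' (size w').-1 = nth x w (size w).-1.
  by rewrite size_w' nth_w' ltnNge (_ : k <= _) /=; [congr nth | ]; lia.
split; rewrite ?w'_first ?w'_last //.
- move=> i; rewrite size_w' => lt_i; rewrite !nth_w'.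
  case: (ltnP i.+1 k) => lt_ik1; case: (ltnP i k) => lt_ik; try lia.
  + by apply: w_path; lia.
  + have -> : b + (i.+1 - k) = b by lia.
    have -> : i = k.-1 by lia.
    by apply: k_adj; lia.
  + have -> : b + (i.+1 - k) = (b + (i - k)).+1 by lia.
    by apply: w_path; lia.
- move=> i; rewrite size_w' => lt_i; rewrite nth_w'.
  by case: ltnP => ik; apply: w_inner; lia.
Qed.

(* A shortest detour is chordless: a chord would cut out a shorter detour. *)
Section MinimalDetour.
Variables (x : T) (w : seq T).
Hypotheses (w_detour : detour x w) (w_min : forall w', size w' < size w -> ~ detour x w').

Lemma minimal_detour_adj a b : a < size w -> b < size w ->
  e (nth x w a) (nth x w b) = (b == a.+1) || (a == b.+1).
Proof.
have [w_path _ [ends_nadj _] _] := w_detour.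
wlog le_ab : a b / a <= b.
  move=> sym; case: (leqP a b) => [|lt_ba] ha hb; first exact: sym.
  by rewrite eS orbC; apply: sym => //; lia.
move=> ha hb; case: (eqVneq a b) => [-> | ne_ab]; first by rewrite e_irr; lia.
case: (eqVneq b a.+1) => [b_succ | nb]; first by rewrite b_succ w_path -?b_succ.
rewrite (_ : a == b.+1 = false) /=; last lia.
apply/negP => e_ab.
have [/andP[a0 bl] | not_ends] := boolP ((a == 0) && (b == (size w).-1)).
  by rewrite -(eqP a0) -(eqP bl) e_ab in ends_nadj.
apply: (w_min (w' := take a.+1 w ++ drop b w)).
  by rewrite size_cat size_takel ?size_drop; lia.
by apply: detour_shortcut => //; lia.
Qed.

Lemma minimal_detour_uniq : uniq (x :: w).
Proof.
have [w_path _ _ w_inner] := w_detour.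
rewrite /= andbC; apply/andP; split.
  apply/(uniqP x) => i j hi hj eq_ij.
  have {}hi : i < size w := hi; have {}hj : j < size w := hj.
  wlog lt_ij : i j hi hj eq_ij / i < j.
    move=> sym; case: (ltngtP i j) => [lt | gt | -> //]; first exact: sym.
    by symmetry; apply: sym.
  exfalso; apply: (w_min (w' := take i w ++ drop j w)).
    by rewrite size_cat size_takel ?size_drop; lia.
  apply: detour_shortcut => //; first by lia.
    by move=> i0; rewrite -eq_ij i0.
  move=> i_gt0; rewrite -eq_ij -[in nth x w i](prednK i_gt0).
  by apply: w_path; lia.
apply/negP => x_in_w; have iw : index x w < size w by rewrite index_mem.
have := detour_adj_center w_detour iw.
rewrite nth_index // e_irr => /esym/norP[i_ne0 i_ne_last].
have /andP[] := w_inner (index x w) (ltac:(lia)); by rewrite nth_index ?eqxx.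
Qed.

Lemma minimal_detour_induced : induced_cycle e (x :: w).
Proof.
have w_gt1 := detour_size w_detour.
split=> /=; [lia | exact: minimal_detour_uniq | move=> x0 i j hi hj].
rewrite !(set_nth_default x x0) //.
case: i hi => [|i] hi; case: j hj => [|j] hj /=.
- by rewrite e_irr modn_small //; lia.
- rewrite detour_adj_center // (modn_succ (i := j.+1)) // (modn_small (m := 1)); last lia.
  by case: ifP; lia.
- rewrite eS detour_adj_center // (modn_succ (i := i.+1)) // (modn_small (m := 1)); last lia.
  by case: ifP; lia.
- rewrite minimal_detour_adj // (modn_succ (i := i.+1)) // (modn_succ (i := j.+1)) //.
  by case: ifP; case: ifP; lia.
Qed.

End MinimalDetour.

Definition simplicial (S : {set T}) (u : T) : Prop := clique e [set w in S | e u w].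

Hypothesis e_chordal : chordal e.

Lemma chordal_no_detour x w : ~ detour x w.
Proof.
elim: {w}(size w) {-2}w (leqnn (size w)) => [|n IHn] w le_wn w_detour.
  by have := detour_size w_detour; lia.
have w_min w' : size w' < size w -> ~ detour x w' by move=> lt_w'w; apply: IHn; lia.
have := e_chordal (minimal_detour_induced w_detour w_min) => /= /eqP; rewrite eqSS => /eqP w2.
have [w_path _ [ends_nadj _] _] := w_detour.
by rewrite w2 w_path ?w2 in ends_nadj.
Qed.

Lemma path_in_all (R : {set T}) d p : path [rel a b in R | e a b] d p -> all [in R] p.
Proof.
by elim: p d => //= a p IHp d /andP[/andP[/andP[_ aR] _] /IHp ->]; rewrite aR.
Qed.

Lemma component_nbrs_adj x (R : {set T}) y z d1 d2 :
    {in R, forall w, (w != x) && ~~ e x w} ->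
    e x y -> e x z -> y != z -> e y d1 -> e z d2 -> d1 \in R ->
  connect [rel a b in R | e a b] d1 d2 -> e y z.
Proof.
(* Otherwise [y], a path from [d1] to [d2] inside [R], and [z] form a detour around [x]. *)
move=> R_far xy xz ne_yz yd1 zd2 d1R /connectP[p pR d2E].
apply/negPn/negP => nadj_yz; apply: (@chordal_no_detour x (y :: rcons (d1 :: p) z)).
have /allP p_in := path_in_all pR.
have yz_path : path e y (rcons (d1 :: p) z).
  rewrite rcons_path /= yd1 -d2E eS zd2 andbT.
  by apply: sub_path pR => a b /= /andP[].
split; rewrite ?nth_last /= ?last_rcons //.
- by move=> i lt_i; move/(pathP x): yz_path; apply.
- move=> [|i] //; rewrite size_rcons /= => lt_i.
  have i_lt : i < size (d1 :: p) by [].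
  rewrite -rcons_cons nth_rcons i_lt; apply: R_far.
  by have := mem_nth x i_lt; rewrite inE => /orP[/eqP -> // | /p_in].
Qed.

Lemma nonclique_dominator (S Q : {set T}) : Q \subset S -> clique e Q -> ~ clique e S ->
  exists x d, [/\ x \in S, d \in S, d != x, ~~ e x d & Q \subset [set y | (y == x) || e x y]].
Proof.
move=> /subsetP QS cQ /cliqueP/forall_inPn[x0 x0S /forall_inPn[y0 y0S]].
rewrite negb_imply => /andP[ne_xy0 nadj_xy0].
have [Q_dom | /subsetPn[q qQ]] := boolP (Q \subset [set y | (y == x0) || e x0 y]).
  by exists x0, y0; rewrite eq_sym.
rewrite inE negb_or => /andP[ne_qx0 nadj_x0q].
exists q, x0; split; [exact: QS | by [] | by rewrite eq_sym | by rewrite eS | ].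
apply/subsetP => q' q'Q; rewrite inE; case: eqVneq => //= ne_q'q.
by apply: cQ; rewrite // eq_sym.
Qed.

(* The component [D] of [d] in [S] minus the closed neighbourhood of [x] is
   separated from [x] by the clique [N]; the induction hypothesis applied to
   [D :|: N] gives a vertex of [D] that is simplicial in [S]. *)
Section Separation.
Variables (S : {set T}) (x d : T).
Hypotheses (xS : x \in S) (dS : d \in S) (d_ne_x : d != x) (x_nadj_d : ~~ e x d).

Let R := [set w in S | (w != x) && ~~ e x w].
Let D := [set w | connect [rel a b in R | e a b] d w].
Let N := [set y in S | e x y && [exists w in D, e y w]].

Let dR : d \in R. Proof. by rewrite inE dS d_ne_x. Qed.

Let dD : d \in D. Proof. by rewrite inE connect0. Qed.

Let D_sub_R w : w \in D -> w \in R.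
Proof.
rewrite inE => /connectP[p /path_in_all/allP p_in ->].
by have := mem_last d p; rewrite inE => /orP[/eqP -> // | /p_in].
Qed.

Let N_clique : clique e N.
Proof.
move=> y z; rewrite !inE => /and3P[_ xy /exists_inP[d1 d1D yd1]].
move=> /and3P[_ xz /exists_inP[d2 d2D zd2]] ne_yz.
apply: (component_nbrs_adj (R := R) _ xy xz ne_yz yd1 zd2 (D_sub_R d1D)).
  by move=> w; rewrite inE => /andP[].
have connect_sym_R : connect_sym [rel a b in R | e a b].
  by apply: sym_connect_sym => a b /=; rewrite eS [X in X && _]andbC.
move: d1D d2D; rewrite !inE => d1D d2D.
by apply: connect_trans _ d2D; rewrite connect_sym_R.
Qed.

Let D_nbrs w a : w \in D -> a \in S -> e w a -> a \in D :|: N.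
Proof.
move=> wD aS wa; have wR := D_sub_R wD; move: (wR); rewrite inE => /and3P[_ _ x_nadj_w].
rewrite !inE aS /=; have [xa | x_nadj_a] := boolP (e x a).
  by apply/orP; right; apply/exists_inP; exists w; rewrite // eS.
rewrite inE in wD; apply/orP; left; apply: connect_trans wD (connect1 _).
rewrite /= wR wa inE aS x_nadj_a /= !andbT.
by apply/eqP => ax; move: x_nadj_w; rewrite eS -ax wa.
Qed.

Let DN_proper : D :|: N \proper S.
Proof.
apply/properP; split.
  by apply/subsetP => w /setUP[/D_sub_R | ]; rewrite inE => /andP[].
exists x => //; rewrite in_setU negb_or; apply/andP; split.
  by apply/negP => /D_sub_R; rewrite inE eqxx andbF.
by rewrite inE e_irr andbF.
Qed.

Lemma separation_step :
    (forall S' Q : {set T}, S' \proper S -> Q \subset S' -> clique e Q -> S' :\: Q != set0 ->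
       exists2 u, u \in S' :\: Q & simplicial S' u) ->
  exists2 u, u \in S & [/\ u != x, ~~ e x u & simplicial S u].
Proof.
move=> IH; have DN_N : (D :|: N) :\: N != set0.
  by apply/set0Pn; exists d; rewrite in_setD in_setU dD inE (negbTE x_nadj_d) /= andbF.
have [u /setDP[/setUP[uD | uN] u_notN] u_simpl] :=
  IH _ N DN_proper (subsetUr D N) N_clique DN_N;
  last by rewrite uN in u_notN.
have /D_sub_R := uD; rewrite inE => /and3P[uS u_ne_x x_nadj_u].
exists u => //; split=> //; apply: subset_clique u_simpl; apply/subsetP => a.
by move=> /setIdP[aS ua]; apply/setIdP; split; first exact: D_nbrs uD aS ua.
Qed.

End Separation.

Lemma chordal_simplicial_outside_clique (S Q : {set T}) :
  Q \subset S -> clique e Q -> S :\: Q != set0 -> exists2 u, u \in S :\: Q & simplicial S u.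
Proof.
move: {2}#|S| (leqnn #|S|) => n; elim: n S Q => [|n IHn] S Q.
  by rewrite leqn0 cards_eq0 => /eqP-> _ _; rewrite set0D eqxx.
move=> le_Sn QS cQ /set0Pn[u0 u0SQ].
case: (cliqueP e S) => [S_clique | S_nclique].
  by exists u0 => //; apply: subset_clique S_clique; apply/subsetP => w /setIdP[].
have [x [d [xS dS d_ne_x x_nadj_d Q_dom]]] := nonclique_dominator QS cQ S_nclique.
have [u uS [u_ne_x x_nadj_u u_simpl]] := separation_step xS dS d_ne_x x_nadj_d
  (fun S' Q' lt_S'S => IHn S' Q' (ltnSE (leq_trans (proper_card lt_S'S) le_Sn))).
exists u => //; rewrite in_setD uS andbT; apply/negP => /(subsetP Q_dom).
by rewrite inE (negbTE u_ne_x) (negbTE x_nadj_u).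
Qed.

Lemma chordal_two_simplicial (S : {set T}) : 1 < #|S| ->
  exists u1 u2, [/\ u1 != u2, u1 \in S, u2 \in S, simplicial S u1 & simplicial S u2].
Proof.
move=> S_gt1.
have [u1 u1S u1_simpl] : exists2 u, u \in S :\: set0 & simplicial S u.
  apply: chordal_simplicial_outside_clique; [exact: sub0set | exact: clique0 | ].
  by rewrite setD0 -card_gt0; lia.
rewrite setD0 in u1S.
have [u2 /setD1P[u2_ne u2S] u2_simpl] : exists2 u, u \in S :\ u1 & simplicial S u.
  apply: chordal_simplicial_outside_clique; [by rewrite sub1set | exact: clique1 | ].
  by rewrite -card_gt0; move: S_gt1; rewrite (cardsD1 u1) u1S; lia.
by exists u2, u1.
Qed.

Definition triangle_nbrs (v : T) : {set T} := [set u | e v u & [exists w, e v w && e u w]].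

Lemma clique_triangle_nbrs (K : {set T}) v : clique e K -> v \in K -> 2 < #|K| ->
  K :\ v \subset triangle_nbrs v.
Proof.
move=> cK vK K_gt2; apply/subsetP => a /setD1P[a_ne_v aK].
have : 0 < #|K :\: [set v; a]|.
  rewrite cardsD (setIidPr _) ?cards2 1?eq_sym ?a_ne_v; first lia.
  by rewrite subUset !sub1set vK aK.
move=> /card_gt0P[b /setDP[bK]]; rewrite !inE negb_or => /andP[b_ne_v b_ne_a].
apply/andP; split; first by apply: cK; rewrite // eq_sym.
by apply/existsP; exists b; apply/andP; split; apply: cK; rewrite // eq_sym.
Qed.

Lemma common_nbrs_clique_exposed v u : e v u ->
    [set w | e v w && e u w] != set0 -> clique e [set w | e v w && e u w] ->
  exposed_edge e v u.
Proof.
move=> vu /set0Pn[w0]; rewrite inE => /andP[vw0 uw0] cC.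
(* [K0] is the unique maximal clique containing [v] and [u], and [w0] makes
   it bigger than the edge. *)
set K0 := [set w | (w == v) || (w == u) || e v w && e u w].
have vK0 : v \in K0 by rewrite inE eqxx.
have uK0 : u \in K0 by rewrite inE eqxx orbT.
have vuK0 : [set v; u] \subset K0 by rewrite subUset !sub1set vK0 uK0.
have K0_clique : clique e K0.
  move=> a b; rewrite !inE => /orP[/orP[]/eqP-> | /andP[va ua]];
    move=> /orP[/orP[]/eqP-> | /andP[vb ub]]; rewrite ?eqxx // => ne_ab; rewrite 1?eS //.
  by apply: cC; rewrite ?inE ?va ?ua ?vb ?ub // eq_sym.
have K0_greatest K : clique e K -> [set v; u] \subset K -> K \subset K0.
  by move=> cK /subsetP vuK; apply: clique_sub_common_nbrs; rewrite // vuK // !inE eqxx ?orbT.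
split.
- by split=> //; apply: contraTneq vu => ->; rewrite e_irr.
- exists K0; split.
    split=> //; split=> // K cK K0K; apply/eqP; rewrite eqEsubset K0K andbT.
    by apply: K0_greatest => //; apply: subset_trans K0K.
  by move=> K [[cK maxK] vuK]; apply: maxK => //; apply: K0_greatest.
- move=> [_ [_ facet]]; have := facet K0 K0_clique vuK0.
  move=> /setP/(_ w0); rewrite !inE vw0 uw0 orbT => /esym/orP[]/eqP w0E.
    by rewrite w0E e_irr in vw0.
  by rewrite w0E e_irr in uw0.
Qed.

Lemma triangle_nbr_simplicial_exposed v u : u \in triangle_nbrs v ->
  simplicial (triangle_nbrs v) u -> exposed_edge e v u.
Proof.
rewrite /simplicial /triangle_nbrs inE => /andP[vu /existsP[w vuw]] u_simpl.
apply: common_nbrs_clique_exposed => //; first by apply/set0Pn; exists w; rewrite inE.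
apply: subset_clique u_simpl; apply/subsetP => a; rewrite !inE => /andP[va ua].
by rewrite va ua andbT /=; apply/existsP; exists u; rewrite vu eS.
Qed.

End ChordalGraph.

Theorem lemma2p11 (T : finType) (e : rel T) (v : T) :
  simple_graph e -> chordal e ->
  (exists K : {set T}, [/\ maximal_clique e K, v \in K & 3 <= #|K|]) ->
  exists u w : T, [/\ u != w, exposed_edge e v u & exposed_edge e v w].
Proof.
move=> [eS e_irr] e_chordal [K [[K_clique _] vK K_gt2]].
have triangle_nbrs_gt1 : 1 < #|triangle_nbrs e v|.
  apply: leq_trans (subset_leq_card (clique_triangle_nbrs K_clique vK K_gt2)).
  by move: K_gt2; rewrite (cardsD1 v K) vK.
have [u1 [u2 [ne_u12 u1_tri u2_tri u1_simpl u2_simpl]]] :=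
  chordal_two_simplicial eS e_irr e_chordal triangle_nbrs_gt1.
by exists u1, u2; split=> //; apply: triangle_nbr_simplicial_exposed.
Qed.
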